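(* Let $a\in\mathbb{R}\setminus\{0\}$, $B>0$, and set $\kappa=\min\{1/8,\ B/18,\ B/(8|a|),\ |a|/8,\ |a|B/4,\ \sqrt{|a|}/2\}$. Let $D(\varepsilon,s)=-\varepsilon s^2+is+\varepsilon a$. Then there exists $\varepsilon_1>0$ such that $$|D(\varepsilon,s)|\ge \kappa\,\max\{\min\{1,s^2\},|\varepsilon|^2\}$$ for all $s\in\mathbb{R}$ and all $\varepsilon\in\mathbb{C}$ with $|\mathrm{Re}\,\varepsilon|\ge B(\mathrm{Im}\,\varepsilon)^2$ and $0<|\varepsilon|<2\varepsilon_1$. *)

From Stdlib Require Import Reals Lra.
Open Scope R_scope.

Definition Cplx : Type := (R * R)%type.
Definition Re (z : Cplx) : R := fst z.
Definition Im (z : Cplx) : R := snd z.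
Definition RtoC (x : R) : Cplx := (x, 0).
Definition Ci : Cplx := (0, 1).
Definition Cadd (z w : Cplx) : Cplx := (Re z + Re w, Im z + Im w).
Definition Copp (z : Cplx) : Cplx := (- Re z, - Im z).
Definition Cmul (z w : Cplx) : Cplx :=
  (Re z * Re w - Im z * Im w, Re z * Im w + Im z * Re w).
Definition Cnorm (z : Cplx) : R := sqrt (Re z ^ 2 + Im z ^ 2).

Definition Dsym (a : R) (eps : Cplx) (s : R) : Cplx :=
  Cadd (Cadd (Copp (Cmul eps (RtoC (s ^ 2)))) (Cmul Ci (RtoC s)))
       (Cmul eps (RtoC a)).

Definition kappa (a B : R) : R :=
  Rmin (/ 8) (Rmin (B / 18) (Rmin (B / (8 * Rabs a))
    (Rmin (Rabs a / 8) (Rmin (Rabs a * B / 4) (sqrt (Rabs a) / 2))))).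

(* Write ε = x + i y, u = a - s², so that D(ε,s) = x u + i (y u + s).
   Two elementary estimates drive everything:
     |D| ≥ |x| |u|            and        |D| ≥ |s| - |y| |u|.
   In the parabolic region |x| ≥ B y² we combine them twice.
   - Low frequencies: κ min(1,s²) ≤ |D| for every ε in the region.  If
     |y||u| ≤ |s|/2 the second estimate gives |D| ≥ |s|/2; otherwise
     |x| |u| ≥ B y² |u| > B s²/(4|u|), which beats κ min(1,s²) because
     4 κ min(1,s²)(s² + |a|) ≤ B s² by the choice of κ.
   - Small ε: κ |ε|² ≤ |D| once |ε| is small.  If |u| ≥ |a|/2 the first
     estimate and |ε|² ≤ 2|x|/B give |D| ≥ |a| B |ε|²/4; otherwise s² is
     close to a, so |s| ≥ c|ε| with c = |a|/2 + 1/8 while |y||u| ≤ |ε||a|/2,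
     and the second estimate gives |D| ≥ |ε|/8.
   The theorem is the maximum of the two bounds, with ε₁ chosen to make
   the smallness conditions of the second one hold. *)

From Stdlib Require Import Reals Lra Psatz.
Open Scope R_scope.

Lemma Cnorm_sqr (z : Cplx) : Cnorm z ^ 2 = Re z ^ 2 + Im z ^ 2.
Proof.
  unfold Cnorm. rewrite <- Rsqr_pow2, Rsqr_sqrt; [reflexivity | nra].
Qed.

Lemma Cnorm_ge_abs_Re (z : Cplx) : Rabs (Re z) <= Cnorm z.
Proof.
  unfold Cnorm. rewrite <- sqrt_Rsqr_abs. apply sqrt_le_1_alt.
  unfold Rsqr. nra.
Qed.

Lemma Cnorm_ge_abs_Im (z : Cplx) : Rabs (Im z) <= Cnorm z.
Proof.
  unfold Cnorm. rewrite <- sqrt_Rsqr_abs. apply sqrt_le_1_alt.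
  unfold Rsqr. nra.
Qed.

Lemma Rabs_sqr (p : R) : Rabs p ^ 2 = p ^ 2.
Proof. split_Rabs; nra. Qed.

Lemma Dsym_coords (a : R) (eps : Cplx) (s : R) :
  Dsym a eps s = (Re eps * (a - s ^ 2), Im eps * (a - s ^ 2) + s).
Proof.
  destruct eps as [x y].
  unfold Dsym, Cadd, Copp, Cmul, RtoC, Ci, Re, Im; simpl. f_equal; ring.
Qed.

Lemma Dsym_ge_Re (a : R) (eps : Cplx) (s : R) :
  Rabs (Re eps) * Rabs (a - s ^ 2) <= Cnorm (Dsym a eps s).
Proof.
  rewrite <- Rabs_mult.
  pose proof (Cnorm_ge_abs_Re (Dsym a eps s)) as H.
  replace (Re (Dsym a eps s)) with (Re eps * (a - s ^ 2)) in H
    by (rewrite Dsym_coords; reflexivity).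
  exact H.
Qed.

Lemma Dsym_ge_Im (a : R) (eps : Cplx) (s : R) :
  Rabs s - Rabs (Im eps) * Rabs (a - s ^ 2) <= Cnorm (Dsym a eps s).
Proof.
  pose proof (Cnorm_ge_abs_Im (Dsym a eps s)) as H.
  replace (Im (Dsym a eps s)) with (Im eps * (a - s ^ 2) + s) in H
    by (rewrite Dsym_coords; reflexivity).
  rewrite <- Rabs_mult.
  pose proof (Rabs_triang_inv s (- (Im eps * (a - s ^ 2)))) as T.
  rewrite Rabs_Ropp in T.
  replace (s - - (Im eps * (a - s ^ 2))) with (Im eps * (a - s ^ 2) + s)
    in T by ring.
  lra.
Qed.

Lemma Rlt_mul_of_lt_div (x p q : R) : 0 < q -> x < p / q -> x * q < p.
Proof.
  intros hq hx. apply (Rmult_lt_compat_r q) in hx; [| exact hq].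
  unfold Rdiv in hx. rewrite Rmult_assoc, Rinv_l in hx; lra.
Qed.

Lemma Rmin_1_sqr_le_abs (s : R) : Rmin 1 (s ^ 2) <= Rabs s.
Proof.
  rewrite <- Rabs_sqr.
  destruct (Rle_lt_dec 1 (Rabs s)).
  - pose proof (Rmin_l 1 (Rabs s ^ 2)); lra.
  - pose proof (Rmin_r 1 (Rabs s ^ 2)); pose proof (Rabs_pos s); nra.
Qed.

Section Symbol.

Variables a B : R.
Hypothesis ha : a <> 0.
Hypothesis hB : 0 < B.

Lemma kappa_pos : 0 < kappa a B.
Proof.
  assert (hA : 0 < Rabs a) by (apply Rabs_pos_lt; exact ha).
  assert (0 < sqrt (Rabs a)) by (apply sqrt_lt_R0; lra).
  unfold kappa.
  repeat apply Rmin_pos; try lra; apply Rdiv_lt_0_compat; nra.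
Qed.

Lemma kappa_le_inv8 : kappa a B <= / 8.
Proof. apply Rmin_l. Qed.

Lemma kappa_le_B18 : kappa a B <= B / 18.
Proof. unfold kappa. eapply Rle_trans; [apply Rmin_r | apply Rmin_l]. Qed.

Lemma kappa_mul_8A_le : kappa a B * (8 * Rabs a) <= B.
Proof.
  assert (hA : 0 < Rabs a) by (apply Rabs_pos_lt; exact ha).
  assert (H : kappa a B <= B / (8 * Rabs a)).
  { unfold kappa. do 2 (eapply Rle_trans; [apply Rmin_r |]). apply Rmin_l. }
  apply (Rmult_le_compat_r (8 * Rabs a)) in H; [| lra].
  unfold Rdiv in H. rewrite Rmult_assoc, Rinv_l in H; lra.
Qed.

Lemma kappa_le_AB4 : kappa a B <= Rabs a * B / 4.
Proof. unfold kappa. do 4 (eapply Rle_trans; [apply Rmin_r |]). apply Rmin_l. Qed.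

Lemma kappa_weight_bound (s : R) :
  4 * kappa a B * Rmin 1 (s ^ 2) * (s ^ 2 + Rabs a) <= B * s ^ 2.
Proof.
  pose proof kappa_pos; pose proof kappa_le_B18; pose proof kappa_mul_8A_le.
  set (k := kappa a B) in *. set (m := Rmin 1 (s ^ 2)).
  assert (m1 : m <= 1) by apply Rmin_l.
  assert (m2 : m <= s ^ 2) by apply Rmin_r.
  assert (m0 : 0 <= m) by (apply Rmin_glb; nra).
  assert (km0 : 0 <= k * m) by (apply Rmult_le_pos; lra).
  destruct (Rle_lt_dec (Rabs a) (s ^ 2)).
  - assert (k * m * (s ^ 2 + Rabs a) <= k * m * (2 * s ^ 2)) by nra.
    assert (k * m * s ^ 2 <= k * s ^ 2)
      by (apply Rmult_le_compat_r; [apply pow2_ge_0 | nra]).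
    assert (k * s ^ 2 <= B / 18 * s ^ 2) by nra.
    nra.
  - assert (k * m * (s ^ 2 + Rabs a) <= k * m * (2 * Rabs a)) by nra.
    assert (k * (8 * Rabs a) * m <= B * m) by nra.
    assert (B * m <= B * s ^ 2) by nra.
    nra.
Qed.

Lemma low_frequency_bound (s : R) (eps : Cplx) :
  Rabs (Re eps) >= B * Im eps ^ 2 ->
  kappa a B * Rmin 1 (s ^ 2) <= Cnorm (Dsym a eps s).
Proof.
  intros hpar.
  pose proof (Dsym_ge_Re a eps s) as N1. pose proof (Dsym_ge_Im a eps s) as N2.
  pose proof (kappa_weight_bound s) as W.
  pose proof kappa_pos; pose proof kappa_le_inv8.
  pose proof (Rmin_1_sqr_le_abs s) as mS.
  rewrite <- (Rabs_sqr (Im eps)) in hpar.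
  assert (Ule : Rabs (a - s ^ 2) <= Rabs a + s ^ 2).
  { pose proof (pow2_ge_0 s). split_Rabs; lra. }
  pose proof (Rabs_sqr s) as SS.
  set (k := kappa a B) in *. set (m := Rmin 1 (s ^ 2)) in *.
  set (N := Cnorm (Dsym a eps s)) in *.
  set (X := Rabs (Re eps)) in *. set (Y := Rabs (Im eps)) in *.
  set (S := Rabs s) in *. set (U := Rabs (a - s ^ 2)) in *.
  assert (m0 : 0 <= m) by (apply Rmin_glb; nra).
  assert (U0 : 0 <= U) by apply Rabs_pos.
  destruct (Rle_lt_dec (Y * U) (S / 2)) as [small | large].
  - nra.
  - (* Here 4 y² u² > s², so |x||u| ≥ B y² |u| > B s²/(4|u|) ≥ κ m. *)
    destruct (Rle_lt_dec (k * m) (X * U)) as [ok | bad]; [lra | exfalso].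
    assert (B * s ^ 2 < 4 * U * (X * U)).
    { assert (4 * (Y * U) ^ 2 > s ^ 2) by nra. nra. }
    assert (U * (X * U) <= U * (k * m)) by (apply Rmult_le_compat_l; lra).
    assert (U * (k * m) <= (Rabs a + s ^ 2) * (k * m)) by (apply Rmult_le_compat_r; nra).
    nra.
Qed.

Lemma small_eps_bound (s : R) (eps : Cplx) :
  Rabs (Re eps) >= B * Im eps ^ 2 ->
  Cnorm eps < 1 -> Cnorm eps * B < 1 ->
  Cnorm eps * (2 * (Rabs a / 2 + / 8) ^ 2) < Rabs a ->
  kappa a B * Cnorm eps ^ 2 <= Cnorm (Dsym a eps s).
Proof.
  intros hpar r1 rB rc.
  assert (hA : 0 < Rabs a) by (apply Rabs_pos_lt; exact ha).
  pose proof (Dsym_ge_Re a eps s) as N1. pose proof (Dsym_ge_Im a eps s) as N2.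
  pose proof (Cnorm_sqr eps) as r2. pose proof (Cnorm_ge_abs_Re eps) as Xr.
  pose proof (Cnorm_ge_abs_Im eps) as Yr.
  pose proof kappa_pos; pose proof kappa_le_inv8; pose proof kappa_le_AB4.
  rewrite <- (Rabs_sqr (Im eps)) in hpar, r2. rewrite <- (Rabs_sqr (Re eps)) in r2.
  set (c := Rabs a / 2 + / 8) in *. set (k := kappa a B) in *.
  set (N := Cnorm (Dsym a eps s)) in *. set (r := Cnorm eps) in *.
  set (X := Rabs (Re eps)) in *. set (Y := Rabs (Im eps)) in *.
  assert (X0 : 0 <= X) by apply Rabs_pos. assert (Y0 : 0 <= Y) by apply Rabs_pos.
  destruct (Rle_lt_dec (Rabs a / 2) (Rabs (a - s ^ 2))) as [far | near].
  - (* |ε|² = x² + y² ≤ |x| |ε| + |x|/B ≤ 2|x|/B *)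
    assert (B * X ^ 2 <= X) by (assert (X * B <= r * B) by nra; nra).
    assert (B * r ^ 2 <= 2 * X) by nra.
    nra.
  - (* s² is close to a, so |s| ≥ c |ε| *)
    assert (sA : s ^ 2 > Rabs a / 2).
    { pose proof (pow2_ge_0 s). split_Rabs; lra. }
    rewrite <- (Rabs_sqr s) in sA.
    pose proof (Rabs_pos s). pose proof (Rabs_pos (a - s ^ 2)).
    assert (Rabs s >= r * c) by nra.
    assert (k * r ^ 2 <= r / 8) by nra.
    assert (Y * Rabs (a - s ^ 2) <= r * (Rabs a / 2)) by nra.
    unfold c in *. nra.
Qed.

End Symbol.

Theorem lemma3p1 (a B : R) (ha : a <> 0) (hB : 0 < B) :
  exists eps1 : R, 0 < eps1 /\
    forall (s : R) (eps : Cplx),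
      Rabs (Re eps) >= B * (Im eps) ^ 2 ->
      0 < Cnorm eps -> Cnorm eps < 2 * eps1 ->
      Cnorm (Dsym a eps s) >=
        kappa a B * Rmax (Rmin 1 (s ^ 2)) (Cnorm eps ^ 2).
Proof.
  assert (hA : 0 < Rabs a) by (apply Rabs_pos_lt; exact ha).
  set (c := Rabs a / 2 + / 8).
  assert (hc : 0 < c) by (unfold c; lra).
  exists (Rmin (/ 2) (Rmin (1 / (2 * B)) (Rabs a / (4 * c ^ 2)))).
  split.
  { apply Rmin_pos; [lra | apply Rmin_pos; apply Rdiv_lt_0_compat; nra]. }
  intros s eps hpar _ hsmall.
  pose proof (Rmin_l (/ 2) (Rmin (1 / (2 * B)) (Rabs a / (4 * c ^ 2)))).
  pose proof (Rmin_r (/ 2) (Rmin (1 / (2 * B)) (Rabs a / (4 * c ^ 2)))).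
  pose proof (Rmin_l (1 / (2 * B)) (Rabs a / (4 * c ^ 2))).
  pose proof (Rmin_r (1 / (2 * B)) (Rabs a / (4 * c ^ 2))).
  assert (rB : Cnorm eps * B < 1).
  { apply Rlt_mul_of_lt_div; [lra |].
    replace (1 / B) with (2 * (1 / (2 * B))) by (field; lra). lra. }
  assert (rc : Cnorm eps * (2 * c ^ 2) < Rabs a).
  { apply Rlt_mul_of_lt_div; [nra |].
    replace (Rabs a / (2 * c ^ 2)) with (2 * (Rabs a / (4 * c ^ 2)))
      by (field; lra). lra. }
  pose proof (low_frequency_bound a B ha hB s eps hpar) as low.
  pose proof (small_eps_bound a B ha hB s eps hpar ltac:(lra) rB rc) as high.
  unfold Rmax. destruct (Rle_dec (Rmin 1 (s ^ 2)) (Cnorm eps ^ 2)); lra.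
Qed.
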